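(* Let $G$ be a graph and $H$ a subgraph of $G$ with well-connected adhesion sets. Then any rooted subtree of $H$ that is normal in $H$ is also normal in $G$.
   Context: For distinct vertices $v,w$, $\kappa_H(v,w)$ denotes the largest size of a family of pairwise internally disjoint $v$–$w$ paths in $H$. For a subgraph $H \subseteq G$, an $H$-path in $G$ is a path with at least one edge whose endvertices lie in $H$ and whose edges and inner vertices lie outside $H$. $H$ has well-connected adhesion sets (in $G$) if the endvertices of every $H$-path in $G$ have infinite connectivity $\kappa_H$ in $H$. A rooted tree $T$ in a graph $K$ (tree order: $x\le y$ iff $x$ lies on the root–$y$ path in $T$) is normal in $K$ if the endvertices of every $T$-path in $K$ are comparable in the tree order. *)

From Stdlib Require Import List.
Import ListNotations.
Set Implicit Arguments.

Record graph (V : Type) := Graph { vtx : V -> Prop; edg : V -> V -> Prop }.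
Arguments vtx {V} g _.
Arguments edg {V} g _ _.

Section Defs.
Variable V : Type.

Definition wf_graph (K : graph V) : Prop :=
  (forall x y, edg K x y -> edg K y x) /\
  (forall x, ~ edg K x x) /\
  (forall x y, edg K x y -> vtx K x /\ vtx K y).

Definition subgraph (H K : graph V) : Prop :=
  (forall x, vtx H x -> vtx K x) /\ (forall x y, edg H x y -> edg K x y).

Fixpoint chain (R : V -> V -> Prop) (p : list V) : Prop :=
  match p with
  | x :: ((y :: _) as t) => R x y /\ chain R t
  | _ => True
  end.

Definition is_path (K : graph V) (p : list V) : Prop :=
  p <> [] /\ NoDup p /\ Forall (vtx K) p /\ chain (edg K) p.

Definition ends (p : list V) (a b : V) : Prop :=
  hd_error p = Some a /\ last p a = b.

Definition inner (p : list V) : list V := removelast (tl p).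

Definition H_path (G H : graph V) (p : list V) : Prop :=
  is_path G p /\ 2 <= length p /\
  (forall a b, ends p a b -> vtx H a /\ vtx H b) /\
  (forall x, In x (inner p) -> ~ vtx H x) /\
  chain (fun x y => ~ edg H x y) p.

(* kappa_H(v,w) is infinite: there is an infinite family of distinct,
   pairwise internally disjoint v-w paths in H *)
Definition kappa_infinite (H : graph V) (v w : V) : Prop :=
  exists f : nat -> list V,
    (forall i, is_path H (f i) /\ ends (f i) v w) /\
    (forall i j, i <> j ->
       f i <> f j /\ (forall x, In x (inner (f i)) -> ~ In x (inner (f j)))).

Definition well_connected_adhesion (G H : graph V) : Prop :=
  forall p a b, H_path G H p -> ends p a b -> kappa_infinite H a b.

Definition connected (T : graph V) : Prop :=
  forall x y, vtx T x -> vtx T y -> exists p, is_path T p /\ ends p x y.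

Definition is_cycle (T : graph V) (p : list V) : Prop :=
  is_path T p /\ 3 <= length p /\
  (forall a b, ends p a b -> edg T b a).

Definition is_tree (T : graph V) : Prop :=
  connected T /\ forall p, ~ is_cycle T p.

Definition tree_le (T : graph V) (r x y : V) : Prop :=
  exists p, is_path T p /\ ends p r y /\ In x p.

Definition comparable (T : graph V) (r x y : V) : Prop :=
  tree_le T r x y \/ tree_le T r y x.

Definition normal_in (K T : graph V) (r : V) : Prop :=
  forall p a b, H_path K T p -> ends p a b -> comparable T r a b.

End Defs.

From Stdlib Require Import List Classical Lia Relations Permutation.
Import ListNotations.

(* Suppose a T-path P of G joins incomparable vertices a and b of T. Their root paths
   in T share an initial segment c and then continue through distinct vertices a' and b'.
   Every maximal subpath of P with no inner vertex in H is an H-edge or an H-path; in the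
   latter case its endvertices are joined by infinitely many internally disjoint paths in
   H, one of which avoids the finite set c. Since P avoids c too, P turns into an a-b walk
   in H - c. Two consecutive T-vertices of that walk are joined by a T-edge or (after
   shortcutting) by a T-path in H, so they are comparable as T is normal in H; as neither
   lies in c, the walk never leaves the branch of T above a'. Hence the root path of b
   passes through a', contradicting a' <> b'. *)


Section Lists.
Context {V : Type}.

Lemma last_cons (x d : V) l : last (x :: l) d = last l x.
Proof.
  revert x d; induction l as [|y l IH]; intros x d; [reflexivity|].
  change (last (y :: l) d = last (y :: l) x). rewrite !IH. reflexivity.
Qed.

Lemma last_app_cons l1 (x d : V) l2 : last (l1 ++ x :: l2) d = last l2 x.
Proof.
  revert d; induction l1 as [|y l1 IH]; intro d.
  - apply last_cons.
  - rewrite <- app_comm_cons, last_cons. apply IH.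
Qed.

Lemma In_last_cons (x : V) l : In (last l x) (x :: l).
Proof.
  revert x; induction l as [|y l IH]; intro x; [left; reflexivity|].
  rewrite last_cons. right. apply IH.
Qed.

Lemma NoDup_last_self {x : V} {l} : NoDup (x :: l) -> last l x = x -> l = [].
Proof.
  intros Hd Hl. destruct l as [|y l]; [reflexivity|exfalso].
  apply NoDup_cons_iff in Hd as [Hx _]. apply Hx.
  rewrite <- Hl at 1. rewrite last_cons. apply In_last_cons.
Qed.

Lemma chain_cons_cons (R : V -> V -> Prop) x y l :
  chain R (x :: y :: l) <-> R x y /\ chain R (y :: l).
Proof. reflexivity. Qed.

Lemma chain_app_cons (R : V -> V -> Prop) l1 x l2 :
  chain R (l1 ++ x :: l2) <-> chain R (l1 ++ [x]) /\ chain R (x :: l2).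
Proof.
  induction l1 as [|y l1 IH]; simpl; [tauto|].
  destruct l1 as [|z l1]; simpl in *; [tauto|]. rewrite IH. tauto.
Qed.

Lemma chain_snoc (R : V -> V -> Prop) x l y :
  chain R (x :: l ++ [y]) <-> chain R (x :: l) /\ R (last l x) y.
Proof.
  revert x; induction l as [|z l IH]; intro x; [simpl; tauto|].
  rewrite <- app_comm_cons, !chain_cons_cons, IH, last_cons. tauto.
Qed.

Lemma chain_impl_In (R S : V -> V -> Prop) l :
  (forall x y, In x l -> In y l -> R x y -> S x y) -> chain R l -> chain S l.
Proof.
  induction l as [|x l IH]; intros HRS; simpl; [trivial|].
  destruct l as [|y l]; [trivial|]. intros [Hxy Hc]. split.
  - apply HRS; simpl; auto.
  - apply IH; [|exact Hc]. intros u v Hu Hv. apply HRS; simpl; auto.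
Qed.

Lemma chain_rev (R : V -> V -> Prop) l :
  (forall x y, R x y -> R y x) -> chain R l -> chain R (rev l).
Proof.
  intro Hsym; induction l as [|x l IH]; simpl; [trivial|].
  destruct l as [|y l]; [trivial|]. intros [Hxy Hc].
  change (rev (y :: l)) with (rev l ++ [y]) in IH |- *.
  rewrite <- app_assoc. apply chain_app_cons. split; [exact (IH Hc)|]. simpl; auto.
Qed.

Lemma chain_shortcut {R : V -> V -> Prop} {x w} : chain R (x :: w) ->
  exists p, NoDup (x :: p) /\ chain R (x :: p) /\ last p x = last w x /\ incl p w.
Proof.
  revert x; induction w as [|y w IH]; intros x Hc.
  - exists []. repeat split; [constructor; [intros []|constructor]|apply incl_refl].
  - destruct Hc as [Hxy Hc]. destruct (IH y Hc) as [p [Hd [Hcp [Hl Hi]]]].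
    assert (Hp : incl (y :: p) (y :: w)) by (apply incl_cons; [left|apply incl_tl]; auto).
    destruct (classic (In x (y :: p))) as [Hx|Hx].
    + destruct (in_split _ _ Hx) as [l1 [l2 E]]. rewrite E in Hd, Hcp, Hp.
      exists l2. repeat split.
      * eapply NoDup_app_remove_l. exact Hd.
      * apply chain_app_cons in Hcp. apply Hcp.
      * rewrite last_cons, <- Hl, <- (last_app_cons l1 x y l2), <- E, last_cons. reflexivity.
      * intros z Hz. apply Hp. apply in_or_app. right. right. exact Hz.
    + exists (y :: p). repeat split; auto.
      * constructor; assumption.
      * rewrite !last_cons. exact Hl.
Qed.

Lemma first_split (P : V -> Prop) l : (exists y, In y l /\ P y) ->
  exists a z b, l = a ++ z :: b /\ P z /\ Forall (fun w => ~ P w) a.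
Proof.
  induction l as [|x l IH]; intros [y [Hy Py]]; [destruct Hy|].
  destruct (classic (P x)) as [Px|nPx].
  - exists [], x, l. auto.
  - destruct Hy as [->|Hy]; [contradiction|].
    destruct IH as [a [z [b [E [Pz Fa]]]]]; [eauto|].
    exists (x :: a), z, b. subst. auto.
Qed.

Lemma common_prefix_split (l1 l2 : list V) :
  (forall k, l2 <> l1 ++ k) -> (forall k, l1 <> l2 ++ k) ->
  exists c x1 x2 k1 k2, l1 = c ++ x1 :: k1 /\ l2 = c ++ x2 :: k2 /\ x1 <> x2.
Proof.
  revert l2; induction l1 as [|x l1 IH]; intros l2 H12 H21.
  - exfalso. exact (H12 l2 eq_refl).
  - destruct l2 as [|y l2]; [exfalso; exact (H21 (x :: l1) eq_refl)|].
    destruct (classic (x = y)) as [<-|Hxy].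
    + destruct (IH l2) as [c [x1 [x2 [k1 [k2 [E1 [E2 Hne]]]]]]].
      * intros k E. apply (H12 k). rewrite E. reflexivity.
      * intros k E. apply (H21 k). rewrite E. reflexivity.
      * exists (x :: c), x1, x2, k1, k2. subst. auto.
    + exists [], x, y, l1, l2. auto.
Qed.

Lemma In_ends_inner {p : list V} {a b z} :
  ends p a b -> In z p -> z = a \/ z = b \/ In z (inner p).
Proof.
  intros [Hh Hl] Hz. destruct p as [|x p]; [discriminate|].
  injection Hh as ->. destruct Hz as [->|Hz]; [auto|]. unfold inner; simpl.
  rewrite last_cons in Hl.
  assert (Hp : p <> []) by (intros ->; destruct Hz).
  rewrite (app_removelast_last a Hp), Hl in Hz.
  apply in_app_or in Hz as [Hz|[->|[]]]; auto.
Qed.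

Lemma finite_meets_finitely_many (D : nat -> V -> Prop) :
  (forall i j x, i <> j -> D i x -> ~ D j x) ->
  forall L, exists N, forall i, N <= i -> forall x, In x L -> ~ D i x.
Proof.
  intros Hdis L. induction L as [|c L [N HN]].
  - exists 0. intros i _ x [].
  - destruct (classic (exists i0, D i0 c)) as [[i0 Hi0]|Hnone].
    + exists (Nat.max N (S i0)). intros i Hi x [<-|Hx].
      * apply (Hdis i0 i); [lia|exact Hi0].
      * apply HN; [lia|exact Hx].
    + exists N. intros i Hi x [<-|Hx]; [|apply HN; auto].
      intro Hc. apply Hnone. eauto.
Qed.

Lemma chain_clos_rt {R : V -> V -> Prop} {x s} :
  chain R (x :: s) -> clos_refl_trans V R x (last s x).
Proof.
  revert x; induction s as [|y s IH]; intros x Hc; [apply rt_refl|].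
  destruct Hc as [Hxy Hc]. rewrite last_cons.
  apply rt_trans with y; [apply rt_step; exact Hxy|exact (IH y Hc)].
Qed.

Lemma clos_rt_chain {R : V -> V -> Prop} {x y} :
  clos_refl_trans V R x y -> exists s, chain R (x :: s) /\ last s x = y.
Proof.
  intro Hxy. apply clos_rt_rt1n in Hxy.
  induction Hxy as [x|x y z Hxy _ [s [Hc Hl]]]; [exists []; split; simpl; auto|].
  exists (y :: s). split; [split; assumption|]. rewrite last_cons. exact Hl.
Qed.

Lemma chain_segment_ind (R : V -> V -> Prop) (P : V -> Prop) (Q : V -> V -> Prop) :
  (forall x, Q x x) -> (forall x y z, Q x y -> Q y z -> Q x z) ->
  (forall x mid y, P x -> P y -> Forall (fun z => ~ P z) mid ->
     chain R (x :: mid ++ [y]) -> Q x y) ->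
  forall x s, P x -> P (last s x) -> chain R (x :: s) -> Q x (last s x).
Proof.
  intros Hrefl Htrans Hseg.
  enough (Hgen : forall s x mid, P x -> Forall (fun z => ~ P z) mid ->
    P (last (mid ++ s) x) -> chain R (x :: mid ++ s) -> Q x (last (mid ++ s) x))
    by (intros x s Hx; exact (Hgen s x [] Hx (Forall_nil _))).
  induction s as [|y s IH]; intros x mid Hx Hmid Hlast Hc.
  - rewrite app_nil_r in *. destruct mid as [|m mid]; [apply Hrefl|].
    exfalso. rewrite Forall_forall in Hmid. apply (Hmid _ (In_last_cons m mid)).
    rewrite <- last_cons with (d := x). exact Hlast.
  - rewrite last_app_cons in *.
    destruct (classic (P y)) as [Hy|Hy].
    + apply Htrans with y.
      * apply Hseg with mid; auto.
        apply (chain_app_cons R (x :: mid) y s). exact Hc.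
      * apply (IH y []); auto.
        apply (chain_app_cons R (x :: mid) y s). exact Hc.
    + specialize (IH x (mid ++ [y])).
      rewrite <- app_assoc in IH. change ([y] ++ s) with (y :: s) in IH.
      rewrite last_app_cons in IH. apply IH; auto. apply Forall_app. auto.
Qed.

End Lists.

Section Graphs.
Context {V : Type}.

Definition graph_minus (K : graph V) (c : list V) : graph V :=
  {| vtx := fun v => vtx K v /\ ~ In v c;
     edg := fun u v => edg K u v /\ ~ In u c /\ ~ In v c |}.

Lemma wf_graph_minus {K : graph V} {c} : wf_graph K -> wf_graph (graph_minus K c).
Proof.
  intros [Hsym [Hloop Hvtx]]. split; [|split]; simpl.
  - intros x y [Hxy [Hx Hy]]. auto.
  - intros x [Hxx _]. exact (Hloop x Hxx).
  - intros x y [Hxy [Hx Hy]]. destruct (Hvtx x y Hxy). auto.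
Qed.

Lemma chain_Forall_vtx {K : graph V} {x l} : wf_graph K -> l <> [] ->
  chain (edg K) (x :: l) -> Forall (vtx K) (x :: l).
Proof.
  intros [_ [_ Hvtx]]. revert x; induction l as [|y l IH]; intros x Hl Hc; [congruence|].
  apply chain_cons_cons in Hc as [Hxy Hc]. destruct (Hvtx x y Hxy) as [Hx Hy].
  constructor; [exact Hx|]. destruct l as [|z l]; [constructor; auto|].
  apply IH; [discriminate|exact Hc].
Qed.

Lemma chain_graph_minus {K : graph V} {c x l} : wf_graph K -> l <> [] ->
  chain (edg (graph_minus K c)) (x :: l) ->
  chain (edg K) (x :: l) /\ Forall (fun z => ~ In z c) (x :: l).
Proof.
  intros wfK Hl Hc. split.
  - apply chain_impl_In with (edg (graph_minus K c)); [|exact Hc].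
    intros u v _ _ [Huv _]. exact Huv.
  - apply Forall_impl with (P := vtx (graph_minus K c)); [intros z [_ Hz]; exact Hz|].
    apply chain_Forall_vtx; [apply wf_graph_minus; exact wfK|exact Hl|exact Hc].
Qed.

Lemma clos_rt_of_path {K : graph V} {c p x y} : is_path K p -> ends p x y ->
  (forall z, In z p -> ~ In z c) -> clos_refl_trans V (edg (graph_minus K c)) x y.
Proof.
  intros [_ [_ [_ Hc]]] [Hh Hl] Hav. destruct p as [|u q]; [discriminate|].
  injection Hh as ->. rewrite last_cons in Hl. subst y.
  apply chain_clos_rt. apply chain_impl_In with (edg K); [|exact Hc].
  intros u v Hu Hv Huv. repeat split; auto.
Qed.

Lemma is_path_split {K : graph V} l1 x l2 :
  is_path K (l1 ++ x :: l2) -> is_path K (l1 ++ [x]) /\ is_path K (x :: l2).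
Proof.
  intros [_ [Hd [Hf Hc]]].
  apply Forall_app in Hf as [Hf1 Hf2]. apply chain_app_cons in Hc as [Hc1 Hc2].
  split; repeat split; auto.
  - destruct l1; discriminate.
  - apply (NoDup_app_remove_r _ l2). rewrite <- app_assoc. exact Hd.
  - apply Forall_app. split; [exact Hf1|]. constructor; [exact (Forall_inv Hf2)|constructor].
  - discriminate.
  - eapply NoDup_app_remove_l. exact Hd.
Qed.

Lemma is_cycle_of_paths {T : graph V} {u z al ga} : wf_graph T ->
  is_path T (u :: al ++ [z]) -> is_path T (u :: ga ++ [z]) ->
  (forall w, In w al -> ~ In w ga) -> al ++ ga <> [] ->
  is_cycle T (rev (u :: al ++ [z]) ++ ga).
Proof.
  intros [Hsym _] [_ [Da [Fa Ca]]] [_ [Db [Fb Cb]]] Hdis Hne.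
  assert (Erev : rev (u :: al ++ [z]) = z :: rev al ++ [u])
    by (simpl; rewrite rev_app_distr; reflexivity).
  assert (EC : rev (u :: al ++ [z]) ++ ga = (z :: rev al) ++ u :: ga)
    by (rewrite Erev; simpl; rewrite <- app_assoc; reflexivity).
  assert (Hperm : Permutation ((u :: al ++ [z]) ++ ga) (rev (u :: al ++ [z]) ++ ga))
    by (apply Permutation_app_tail, Permutation_rev).
  apply NoDup_cons_iff in Db as [Hu_b Db].
  apply chain_snoc in Cb as [Cb Hzb].
  split; [split; [|split; [|split]]|split].
  - rewrite EC. discriminate.
  - apply (Permutation_NoDup Hperm), NoDup_app;
      [exact Da|eapply NoDup_app_remove_r; exact Db|].
    intros w [<-|Hw] Hwg; [apply Hu_b, in_or_app; auto|].
    apply in_app_or in Hw as [Hw|[<-|[]]]; [exact (Hdis w Hw Hwg)|].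
    apply (NoDup_remove_2 _ _ _ Db). rewrite app_nil_r. exact Hwg.
  - rewrite Forall_forall in Fa, Fb |- *. intros w Hw.
    apply (Permutation_in _ (Permutation_sym Hperm)), in_app_or in Hw as [Hw|Hw];
      [apply Fa; exact Hw|apply Fb; right; apply in_or_app; auto].
  - rewrite EC. apply chain_app_cons. split; [|exact Cb].
    change ((z :: rev al) ++ [u]) with (z :: rev al ++ [u]). rewrite <- Erev.
    apply chain_rev; assumption.
  - assert (Hlen : length (al ++ ga) <> 0) by (intro E; apply Hne, length_zero_iff_nil, E).
    rewrite length_app in Hlen. rewrite EC, length_app. simpl. rewrite length_rev. lia.
  - intros a b [Ha Hb]. rewrite EC in Ha, Hb. injection Ha as <-.
    rewrite last_app_cons in Hb. subst b. exact Hzb.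
Qed.

Lemma tree_path_unique {T : graph V} : wf_graph T -> is_tree T ->
  forall {u p1 p2}, is_path T (u :: p1) -> is_path T (u :: p2) ->
  last p1 u = last p2 u -> p1 = p2.
Proof.
  intros wfT [_ Hacyc] u p1. revert u.
  induction p1 as [|v1 q1 IH]; intros u p2 P1 P2 Hl.
  - symmetry. apply (NoDup_last_self (proj1 (proj2 P2))). symmetry. exact Hl.
  - destruct p2 as [|v2 q2].
    + exfalso. apply NoDup_last_self in Hl; [discriminate|exact (proj1 (proj2 P1))].
    + destruct (classic (v1 = v2)) as [<-|Hne].
      * f_equal. apply (IH v1).
        -- exact (proj2 (is_path_split [u] v1 q1 P1)).
        -- exact (proj2 (is_path_split [u] v1 q2 P2)).
        -- rewrite !last_cons in Hl. exact Hl.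
      * (* The first vertex of [v2 :: q2] on [v1 :: q1] closes a cycle through u. *)
        exfalso. rewrite !last_cons in Hl.
        destruct (first_split (fun w => In w (v1 :: q1)) (v2 :: q2))
          as [ga [z [de [E2 [Hz Hga]]]]].
        { exists (last q2 v2). split; [apply In_last_cons|].
          rewrite <- Hl. apply In_last_cons. }
        destruct (in_split _ _ Hz) as [al [be E1]].
        apply (Hacyc (rev (u :: al ++ [z]) ++ ga)).
        apply is_cycle_of_paths; [exact wfT| | | |].
        -- rewrite E1 in P1. exact (proj1 (is_path_split (u :: al) z be P1)).
        -- rewrite E2 in P2. exact (proj1 (is_path_split (u :: ga) z de P2)).
        -- intros w Hw Hwg. rewrite Forall_forall in Hga. apply (Hga w Hwg).
           rewrite E1. apply in_or_app. left. exact Hw.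
        -- intro E. apply app_eq_nil in E as [-> ->]. simpl in E1, E2. congruence.
Qed.

Lemma H_path_of_walk {G K : graph V} {x mid y} : wf_graph G -> wf_graph K ->
  vtx K x -> vtx K y -> x <> y -> ~ edg K x y -> Forall (fun z => ~ vtx K z) mid ->
  chain (edg G) (x :: mid ++ [y]) -> exists p, H_path G K p /\ ends p x y.
Proof.
  intros wfG [Ksym [Kloop Kvtx]] Hx Hy Hxy HKxy Hmid Hc.
  destruct (chain_shortcut Hc) as [p [Hd [Hcp [Hl Hi]]]]. rewrite last_last in Hl.
  assert (Hp : p <> []) by (intros ->; exact (Hxy Hl)).
  assert (HK : forall w, In w (x :: p) -> vtx K w -> w = x \/ w = y).
  { intros w [<-|Hw] HwK; [auto|]. apply Hi, in_app_or in Hw as [Hw|[<-|[]]]; [|auto].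
    rewrite Forall_forall in Hmid. exfalso. exact (Hmid w Hw HwK). }
  exists (x :: p). split; [|split; [reflexivity|rewrite last_cons; exact Hl]].
  split; [repeat split; [discriminate|exact Hd|apply chain_Forall_vtx; assumption|exact Hcp]|].
  split; [destruct p; [contradiction|simpl; lia]|split; [|split]].
  - intros a b [Ha Hb]. injection Ha as <-. rewrite last_cons, Hl in Hb. subst b. auto.
  - intros w Hw HwK. unfold inner in Hw. simpl in Hw.
    apply NoDup_cons_iff in Hd as [Hxp Hd].
    assert (Hwp : In w p) by (rewrite (app_removelast_last x Hp); apply in_or_app; auto).
    rewrite (app_removelast_last x Hp), Hl in Hd.
    destruct (HK w (or_intror Hwp) HwK) as [->| ->]; [exact (Hxp Hwp)|].
    apply (NoDup_remove_2 _ _ _ Hd). rewrite app_nil_r. exact Hw.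
  - apply chain_impl_In with (edg G); [|exact Hcp].
    intros u v Hu Hv _ HKuv. destruct (Kvtx u v HKuv) as [HuK HvK].
    destruct (HK u Hu HuK) as [-> | ->], (HK v Hv HvK) as [-> | ->].
    + exact (Kloop x HKuv).
    + exact (HKxy HKuv).
    + exact (HKxy (Ksym _ _ HKuv)).
    + exact (Kloop y HKuv).
Qed.

Lemma reroute_segment {G H : graph V} {c x mid y} :
  wf_graph G -> wf_graph H -> well_connected_adhesion G H ->
  vtx H x -> vtx H y -> Forall (fun z => ~ vtx H z) mid ->
  chain (edg (graph_minus G c)) (x :: mid ++ [y]) ->
  clos_refl_trans V (edg (graph_minus H c)) x y.
Proof.
  intros wfG wfH wca Hx Hy Hmid Hc.
  destruct (chain_graph_minus wfG (not_eq_sym (app_cons_not_nil mid [] y)) Hc) as [HcG Hav].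
  rewrite Forall_forall in Hav.
  assert (Hxc : ~ In x c) by (apply Hav; left; reflexivity).
  assert (Hyc : ~ In y c) by (apply Hav; right; apply in_elt).
  destruct (classic (x = y)) as [<-|Hne]; [apply rt_refl|].
  destruct (classic (edg H x y)) as [HHxy|HHxy]; [apply rt_step; simpl; auto|].
  destruct (H_path_of_walk wfG wfH Hx Hy Hne HHxy Hmid HcG) as [p [Hp Ep]].
  destruct (wca _ _ _ Hp Ep) as [f [Hf Hdis]].
  destruct (finite_meets_finitely_many (fun i z => In z (inner (f i)))
              (fun i j z Hij => proj2 (Hdis i j Hij) z) c) as [N HN].
  destruct (Hf N) as [PN EN].
  apply (clos_rt_of_path PN EN). intros z Hz Hzc.
  destruct (In_ends_inner EN Hz) as [->|[->|Hin]];
    [exact (Hxc Hzc)|exact (Hyc Hzc)|exact (HN N (le_n N) z Hzc Hin)].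
Qed.

Lemma reroute_walk {G H : graph V} {c x s} :
  wf_graph G -> wf_graph H -> well_connected_adhesion G H ->
  vtx H x -> vtx H (last s x) -> chain (edg (graph_minus G c)) (x :: s) ->
  clos_refl_trans V (edg (graph_minus H c)) x (last s x).
Proof.
  intros wfG wfH wca.
  apply (chain_segment_ind (edg (graph_minus G c)) (vtx H)).
  - intro; apply rt_refl.
  - intros u v w Huv Hvw. exact (rt_trans _ _ _ _ _ Huv Hvw).
  - intros u mid v Hu Hv Hmid Hc. exact (reroute_segment wfG wfH wca Hu Hv Hmid Hc).
Qed.

Definition root_path (T : graph V) (r x : V) (l : list V) : Prop :=
  is_path T l /\ ends l r x.

Definition in_branch (T : graph V) (r : V) (c : list V) (a x : V) : Prop :=
  exists k, root_path T r x (c ++ a :: k).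

Lemma root_path_In {T : graph V} {r x l} : root_path T r x l -> In x l.
Proof.
  intros [_ [Hh Hl]]. destruct l as [|y l]; [discriminate|].
  rewrite <- Hl, last_cons. apply In_last_cons.
Qed.

Section Tree.
Context {T : graph V} {r : V}.
Hypotheses (wfT : wf_graph T) (treeT : is_tree T) (rT : vtx T r).

Lemma root_path_exists {x} : vtx T x -> exists l, root_path T r x l.
Proof. intro Hx. exact (proj1 treeT r x rT Hx). Qed.

Lemma root_path_unique {x l1 l2} : root_path T r x l1 -> root_path T r x l2 -> l1 = l2.
Proof.
  intros [P1 [H1 L1]] [P2 [H2 L2]].
  destruct l1 as [|u p1]; [discriminate|]. destruct l2 as [|u' p2]; [discriminate|].
  injection H1 as ->. injection H2 as ->. f_equal.
  apply (tree_path_unique wfT treeT P1 P2). rewrite last_cons in L1, L2. congruence.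
Qed.

Lemma root_path_prefix {x y lx ly} : tree_le T r x y ->
  root_path T r x lx -> root_path T r y ly -> exists k, ly = lx ++ k.
Proof.
  intros [p [Pp [Ep Hx]]] Rx Ry.
  rewrite <- (root_path_unique (conj Pp Ep) Ry).
  destruct (in_split _ _ Hx) as [l1 [l2 ->]].
  exists l2. rewrite (root_path_unique (l2 := l1 ++ [x]) Rx).
  { rewrite <- app_assoc. reflexivity. }
  split; [exact (proj1 (is_path_split l1 x l2 Pp))|split].
  - destruct l1; exact (proj1 Ep).
  - apply last_last.
Qed.

Lemma edge_comparable {x y lx} : edg T x y -> root_path T r x lx -> comparable T r x y.
Proof.
  intros Hxy [Px [Hh Hl]].
  destruct (classic (In y lx)) as [Hy|Hy].
  { right. exists lx. exact (conj Px (conj (conj Hh Hl) Hy)). }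
  left.
  exists (lx ++ [y]). destruct Px as [_ [Hd [Hf Hc]]].
  destruct lx as [|v l]; [discriminate|]. rewrite last_cons in Hl.
  repeat split.
  - discriminate.
  - apply NoDup_app; [exact Hd|repeat constructor; intros []|].
    intros w Hw [<-|[]]. exact (Hy Hw).
  - apply Forall_app. split; [exact Hf|].
    repeat constructor. apply (proj2 (proj2 wfT) x y Hxy).
  - apply (chain_snoc (edg T) v l y). rewrite Hl. auto.
  - exact Hh.
  - apply last_last.
  - apply in_or_app. left. rewrite <- Hl. apply In_last_cons.
Qed.

Lemma in_branch_step {c a u t} : comparable T r u t -> vtx T t -> ~ In t c ->
  in_branch T r c a u -> in_branch T r c a t.
Proof.
  intros Hut Ht Htc [k Ru]. destruct (root_path_exists Ht) as [lt Rt].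
  destruct Hut as [Hle|Hle].
  - destruct (root_path_prefix Hle Ru Rt) as [m ->].
    exists (k ++ m). rewrite <- app_assoc in Rt. exact Rt.
  - destruct (root_path_prefix Hle Rt Ru) as [m E].
    assert (Hin := root_path_In Rt).
    destruct (app_eq_app _ _ _ _ (eq_sym E)) as [n [[Elt En]|[Ec _]]].
    + destruct n as [|v n].
      * rewrite Elt, app_nil_r in Hin. contradiction.
      * injection En as Eav _. exists n. rewrite Eav, <- Elt. exact Rt.
    + exfalso. apply Htc. rewrite Ec. apply in_or_app. auto.
Qed.

Lemma in_branch_unique {c a b x} : in_branch T r c a x -> in_branch T r c b x -> a = b.
Proof.
  intros [k Ra] [m Rb]. pose proof (root_path_unique Ra Rb) as E.
  apply app_inv_head in E. congruence.
Qed.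

Lemma incomparable_branches {a b} : vtx T a -> vtx T b -> ~ comparable T r a b ->
  exists c a' b', in_branch T r c a' a /\ in_branch T r c b' b /\ a' <> b' /\
    ~ In a c /\ ~ In b c /\ Forall (vtx T) c.
Proof.
  intros Ha Hb Hab.
  destruct (root_path_exists Ha) as [la Ra]. destruct (root_path_exists Hb) as [lb Rb].
  assert (Hb_la : ~ In b la) by (intro Hin; apply Hab; right; exists la; destruct Ra; auto).
  assert (Ha_lb : ~ In a lb) by (intro Hin; apply Hab; left; exists lb; destruct Rb; auto).
  destruct (common_prefix_split la lb) as [c [a' [b' [k1 [k2 [Ea [Eb Hne]]]]]]].
  - intros k E. apply Ha_lb. rewrite E. apply in_or_app. left. exact (root_path_In Ra).
  - intros k E. apply Hb_la. rewrite E. apply in_or_app. left. exact (root_path_In Rb).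
  - exists c, a', b'. rewrite Ea in Ra, Hb_la. rewrite Eb in Rb, Ha_lb.
    split; [exists k1; exact Ra|]. split; [exists k2; exact Rb|]. split; [exact Hne|].
    split; [intro Hin; apply Ha_lb, in_or_app; auto|].
    split; [intro Hin; apply Hb_la, in_or_app; auto|].
    destruct Ra as [[_ [_ [Hf _]]] _]. apply Forall_app in Hf. apply Hf.
Qed.

Context {H : graph V}.
Hypotheses (wfH : wf_graph H) (normH : normal_in H T r).

Lemma branch_segment {c a u mid t} :
  vtx T u -> vtx T t -> Forall (fun z => ~ vtx T z) mid ->
  chain (edg (graph_minus H c)) (u :: mid ++ [t]) ->
  in_branch T r c a u -> in_branch T r c a t.
Proof.
  intros Hu Ht Hmid Hc Bu.
  destruct (classic (u = t)) as [<-|Hne]; [exact Bu|].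
  destruct (chain_graph_minus wfH (not_eq_sym (app_cons_not_nil mid [] t)) Hc) as [HcH Hav].
  apply (in_branch_step (u := u)); [|exact Ht| |exact Bu].
  - destruct (classic (edg T u t)) as [HT|HT].
    + destruct (root_path_exists Hu) as [lu Ru]. exact (edge_comparable HT Ru).
    + destruct (H_path_of_walk wfH wfT Hu Ht Hne HT Hmid HcH) as [p [Hp Ep]].
      exact (normH _ _ _ Hp Ep).
  - rewrite Forall_forall in Hav. apply Hav. right. apply in_elt.
Qed.

Lemma branch_walk {c a u s} : vtx T u -> vtx T (last s u) ->
  chain (edg (graph_minus H c)) (u :: s) ->
  in_branch T r c a u -> in_branch T r c a (last s u).
Proof.
  intros Hu Hl Hc.
  apply (chain_segment_ind (edg (graph_minus H c)) (vtx T)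
           (fun x y => in_branch T r c a x -> in_branch T r c a y)); auto.
  intros x mid y Hx Hy Hmid Hseg. exact (branch_segment Hx Hy Hmid Hseg).
Qed.

End Tree.
End Graphs.

Theorem lemma3p1 (V : Type) (G H T : graph V) (r : V) :
  wf_graph G -> wf_graph H -> subgraph H G ->
  well_connected_adhesion G H ->
  wf_graph T -> subgraph T H -> is_tree T -> vtx T r ->
  normal_in H T r ->
  normal_in G T r.
Proof.
  intros wfG wfH _ wca wfT sTH treeT rT normH p a b Hp Eab.
  destruct (classic (comparable T r a b)) as [Hab|Hab]; [exact Hab|exfalso].
  destruct Hp as [[_ [_ [_ Hcp]]] [_ [Hends [Hinner _]]]].
  destruct (Hends a b Eab) as [Ha Hb].
  destruct (incomparable_branches treeT rT Ha Hb Hab)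
    as [c [a' [b' [Ba [Bb [Hne [Hac [Hbc HcT]]]]]]]].
  assert (Hav : forall z, In z p -> ~ In z c).
  { intros z Hz Hzc. rewrite Forall_forall in HcT.
    destruct (In_ends_inner Eab Hz) as [->|[->|Hin]];
      [exact (Hac Hzc)|exact (Hbc Hzc)|exact (Hinner z Hin (HcT z Hzc))]. }
  destruct Eab as [Hh Hl]. destruct p as [|x s]; [discriminate|].
  injection Hh as ->. rewrite last_cons in Hl. subst b.
  assert (HcG : chain (edg (graph_minus G c)) (a :: s)).
  { apply chain_impl_In with (edg G); [|exact Hcp]. intros u v Hu Hv Huv. repeat split; auto. }
  destruct (clos_rt_chain (reroute_walk wfG wfH wca (proj1 sTH a Ha) (proj1 sTH _ Hb) HcG))
    as [w [Hw Hlast]].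
  rewrite <- Hlast in Hb, Bb.
  exact (Hne (in_branch_unique wfT treeT (branch_walk wfT treeT rT wfH normH Ha Hb Hw Ba) Bb)).
Qed.
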